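(* For every bigroupoid $\mathcal B$ there exist an AU-bigroupoid $\mathcal S\mathcal B$ and weak equivalences (biequivalences) $(E,\epsilon):\mathcal S\mathcal B\to\mathcal B$ and $(S,\sigma):\mathcal B\to\mathcal S\mathcal B$.
   Context: A bigroupoid $\mathcal B$ consists of: a set $\mathcal B_0$ of 0-cells; for each $A,B$ a groupoid $\mathcal B(A,B)$ (objects: 1-cells; arrows: 2-cells); composition functors $*$; identity 1-cells $1_A$; inversion functors $(-)^*$; and natural isomorphisms $\mathbf a:(h*g)*f\Rightarrow h*(g*f)$, $\mathbf l:1_B*f\Rightarrow f$, $\mathbf r:f*1_A\Rightarrow f$, $\mathbf e:f^**f\Rightarrow 1_A$, $\mathbf i:1_B\Rightarrow f*f^*$, such that the pentagon for $\mathbf a$ commutes, $(\mathrm{id}*\mathbf l)\circ\mathbf a=\mathbf r*\mathrm{id}$, and $\mathbf r_f\circ(\mathrm{id}*\mathbf e_f)\circ\mathbf a\circ(\mathbf i_f*\mathrm{id})=\mathbf l_f$. An AU-bigroupoid is a bigroupoid in which $\mathbf a,\mathbf l,\mathbf r$ are identities. A morphism $(F,\phi):\mathcal A\to\mathcal B$ consists of a function on 0-cells, functors $F_{A,A'}:\mathcal A(A,A')\to\mathcal B(FA,FA')$ and natural isomorphisms $\phi_{g,f}:Fg*Ff\Rightarrow F(g*f)$, $\phi_A:1_{FA}\Rightarrow F1_A$, $\phi_f:(Ff)^*\Rightarrow F(f^* )$ satisfying $F\mathbf a\circ\phi\circ(\phi*\mathrm{id})=\phi\circ(\mathrm{id}*\phi)\circ\mathbf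 a$, $F\mathbf r\circ\phi\circ(\mathrm{id}*\phi_A)=\mathbf r$, $F\mathbf l\circ\phi\circ(\phi_B*\mathrm{id})=\mathbf l$, $F\mathbf e\circ\phi\circ(\phi_f*\mathrm{id})=\phi_A\circ\mathbf e$, $F\mathbf i\circ\phi_B=\phi\circ(\mathrm{id}*\phi_f)\circ\mathbf i$. A weak equivalence (biequivalence) $F:\mathcal A\to\mathcal B$ is a morphism such that every 0-cell $B$ of $\mathcal B$ admits a 1-cell $B\to FA'$ for some 0-cell $A'$ of $\mathcal A$, and each $F_{A,A'}$ is an equivalence of categories. *)

Set Implicit Arguments.
Unset Strict Implicit.

(** * Groupoids (2-cells are the arrows; laws hold up to Leibniz equality) *)
Record Groupoid : Type := {
  gob : Type;
  ghom : gob -> gob -> Type;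
  gcomp : forall {x y z : gob}, ghom y z -> ghom x y -> ghom x z;
  gid : forall x : gob, ghom x x;
  ginv : forall {x y : gob}, ghom x y -> ghom y x;
  gcomp_assoc : forall x y z w (h : ghom z w) (g : ghom y z) (f : ghom x y),
      gcomp h (gcomp g f) = gcomp (gcomp h g) f;
  gcomp_id_l : forall x y (f : ghom x y), gcomp (gid y) f = f;
  gcomp_id_r : forall x y (f : ghom x y), gcomp f (gid x) = f;
  ginv_l : forall x y (f : ghom x y), gcomp (ginv f) f = gid x;
  ginv_r : forall x y (f : ghom x y), gcomp f (ginv f) = gid y
}.
Arguments gcomp {_ _ _ _} _ _.
Arguments gid {_} _.
Arguments ginv {_ _ _} _.
Arguments ghom {_} _ _.

Record Functor (C D : Groupoid) : Type := {
  fob : gob C -> gob D;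
  fmap : forall {x y : gob C}, ghom x y -> ghom (fob x) (fob y);
  fmap_id : forall x, fmap (gid x) = gid (fob x);
  fmap_comp : forall x y z (g : ghom y z) (f : ghom x y),
      fmap (gcomp g f) = gcomp (fmap g) (fmap f)
}.
Arguments fob {_ _} _ _.
Arguments fmap {_ _} _ {_ _} _.

Definition id_functor (C : Groupoid) : Functor C C.
Proof.
  refine {| fob := fun x => x; fmap := fun _ _ f => f |}; reflexivity.
Defined.

Definition comp_functor (C D E : Groupoid) (G : Functor D E) (F : Functor C D)
  : Functor C E.
Proof.
  refine {| fob := fun x => fob G (fob F x);
            fmap := fun _ _ f => fmap G (fmap F f) |}.
  - intro x; rewrite fmap_id; apply fmap_id.
  - intros; rewrite fmap_comp; apply fmap_comp.
Defined.

(** Natural isomorphisms (in a groupoid every component is invertible) *)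
Record NatIso (C D : Groupoid) (F G : Functor C D) : Type := {
  ncomp : forall x : gob C, ghom (fob F x) (fob G x);
  nnat : forall x y (f : ghom x y),
      gcomp (ncomp y) (fmap F f) = gcomp (fmap G f) (ncomp x)
}.

Definition IsEquivalence (C D : Groupoid) (F : Functor C D) : Prop :=
  exists G : Functor D C,
    inhabited (NatIso (comp_functor G F) (id_functor C)) /\
    inhabited (NatIso (comp_functor F G) (id_functor D)).

Record Bigroupoid : Type := {
  Ob : Type;
  Hom : Ob -> Ob -> Groupoid;
  hc : forall {A B C : Ob}, gob (Hom B C) -> gob (Hom A B) -> gob (Hom A C);
  hc2 : forall {A B C : Ob} {g g' : gob (Hom B C)} {f f' : gob (Hom A B)},
      ghom g g' -> ghom f f' -> ghom (hc g f) (hc g' f');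
  hc2_id : forall A B C (g : gob (Hom B C)) (f : gob (Hom A B)),
      hc2 (gid g) (gid f) = gid (hc g f);
  hc2_comp : forall A B C (g g' g'' : gob (Hom B C)) (f f' f'' : gob (Hom A B))
      (b' : ghom g' g'') (b : ghom g g') (a' : ghom f' f'') (a : ghom f f'),
      hc2 (gcomp b' b) (gcomp a' a) = gcomp (hc2 b' a') (hc2 b a);
  one : forall A : Ob, gob (Hom A A);
  inv1 : forall {A B : Ob}, gob (Hom A B) -> gob (Hom B A);
  inv2 : forall {A B : Ob} {f f' : gob (Hom A B)}, ghom f f' -> ghom (inv1 f) (inv1 f');
  inv2_id : forall A B (f : gob (Hom A B)), inv2 (gid f) = gid (inv1 f);
  inv2_comp : forall A B (f f' f'' : gob (Hom A B)) (a' : ghom f' f'') (a : ghom f f'),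
      inv2 (gcomp a' a) = gcomp (inv2 a') (inv2 a);
  assoc : forall {A B C D : Ob} (h : gob (Hom C D)) (g : gob (Hom B C)) (f : gob (Hom A B)),
      ghom (hc (hc h g) f) (hc h (hc g f));
  assoc_nat : forall A B C D (h h' : gob (Hom C D)) (g g' : gob (Hom B C))
      (f f' : gob (Hom A B)) (c : ghom h h') (b : ghom g g') (a : ghom f f'),
      gcomp (assoc h' g' f') (hc2 (hc2 c b) a) = gcomp (hc2 c (hc2 b a)) (assoc h g f);
  lu : forall {A B : Ob} (f : gob (Hom A B)), ghom (hc (one B) f) f;
  lu_nat : forall A B (f f' : gob (Hom A B)) (a : ghom f f'),
      gcomp (lu f') (hc2 (gid (one B)) a) = gcomp a (lu f);
  ru : forall {A B : Ob} (f : gob (Hom A B)), ghom (hc f (one A)) f;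
  ru_nat : forall A B (f f' : gob (Hom A B)) (a : ghom f f'),
      gcomp (ru f') (hc2 a (gid (one A))) = gcomp a (ru f);
  ev : forall {A B : Ob} (f : gob (Hom A B)), ghom (hc (inv1 f) f) (one A);
  ev_nat : forall A B (f f' : gob (Hom A B)) (a : ghom f f'),
      gcomp (ev f') (hc2 (inv2 a) a) = gcomp (gid (one A)) (ev f);
  co : forall {A B : Ob} (f : gob (Hom A B)), ghom (one B) (hc f (inv1 f));
  co_nat : forall A B (f f' : gob (Hom A B)) (a : ghom f f'),
      gcomp (co f') (gid (one B)) = gcomp (hc2 a (inv2 a)) (co f);
  pentagon : forall A B C D E (k : gob (Hom D E)) (h : gob (Hom C D))
      (g : gob (Hom B C)) (f : gob (Hom A B)),
      gcomp (hc2 (gid k) (assoc h g f))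
            (gcomp (assoc k (hc h g) f) (hc2 (assoc k h g) (gid f)))
      = gcomp (assoc k h (hc g f)) (assoc (hc k h) g f);
  triangle : forall A B C (g : gob (Hom B C)) (f : gob (Hom A B)),
      gcomp (hc2 (gid g) (lu f)) (assoc g (one B) f) = hc2 (ru g) (gid f);
  zigzag : forall A B (f : gob (Hom A B)),
      gcomp (ru f) (gcomp (hc2 (gid f) (ev f))
        (gcomp (assoc f (inv1 f) f) (hc2 (co f) (gid f)))) = lu f
}.
Arguments hc {_ _ _ _} _ _.
Arguments hc2 {_ _ _ _ _ _ _ _} _ _.
Arguments one {_} _.
Arguments inv1 {_ _ _} _.
Arguments inv2 {_ _ _ _ _} _.
Arguments assoc {_ _ _ _ _} _ _ _.
Arguments lu {_ _ _} _.
Arguments ru {_ _ _} _.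
Arguments ev {_ _ _} _.
Arguments co {_ _ _} _.

Definition cell_of_eq (C : Groupoid) (x y : gob C) (p : x = y) : ghom x y :=
  match p in _ = z return ghom x z with eq_refl => gid x end.

(** AU-bigroupoid: a, l, r are identities (so in particular the 1-cells
    involved coincide). *)
Definition IsAU (B : Bigroupoid) : Prop :=
  (forall (A0 A1 A2 A3 : Ob B) (h : gob (Hom A2 A3)) (g : gob (Hom A1 A2))
      (f : gob (Hom A0 A1)),
      exists p : hc (hc h g) f = hc h (hc g f), assoc h g f = cell_of_eq p) /\
  (forall (A0 A1 : Ob B) (f : gob (Hom A0 A1)),
      exists p : hc (one A1) f = f, lu f = cell_of_eq p) /\
  (forall (A0 A1 : Ob B) (f : gob (Hom A0 A1)),
      exists p : hc f (one A0) = f, ru f = cell_of_eq p).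

Record Morphism (A B : Bigroupoid) : Type := {
  F0 : Ob A -> Ob B;
  F1 : forall X Y : Ob A, Functor (Hom X Y) (Hom (F0 X) (F0 Y));
  phi2 : forall (X Y Z : Ob A) (g : gob (Hom Y Z)) (f : gob (Hom X Y)),
      ghom (hc (fob (F1 Y Z) g) (fob (F1 X Y) f)) (fob (F1 X Z) (hc g f));
  phi2_nat : forall X Y Z (g g' : gob (Hom Y Z)) (f f' : gob (Hom X Y))
      (b : ghom g g') (a : ghom f f'),
      gcomp (fmap (F1 X Z) (hc2 b a)) (phi2 g f)
      = gcomp (phi2 g' f') (hc2 (fmap (F1 Y Z) b) (fmap (F1 X Y) a));
  phi0 : forall X : Ob A, ghom (one (F0 X)) (fob (F1 X X) (one X));
  phiinv : forall (X Y : Ob A) (f : gob (Hom X Y)),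
      ghom (inv1 (fob (F1 X Y) f)) (fob (F1 Y X) (inv1 f));
  phiinv_nat : forall X Y (f f' : gob (Hom X Y)) (a : ghom f f'),
      gcomp (fmap (F1 Y X) (inv2 a)) (phiinv f)
      = gcomp (phiinv f') (inv2 (fmap (F1 X Y) a));
  mor_assoc : forall W X Y Z (h : gob (Hom Y Z)) (g : gob (Hom X Y)) (f : gob (Hom W X)),
      gcomp (fmap (F1 W Z) (assoc h g f))
        (gcomp (phi2 (hc h g) f) (hc2 (phi2 h g) (gid (fob (F1 W X) f))))
      = gcomp (phi2 h (hc g f))
        (gcomp (hc2 (gid (fob (F1 Y Z) h)) (phi2 g f))
          (assoc (fob (F1 Y Z) h) (fob (F1 X Y) g) (fob (F1 W X) f)));
  mor_ru : forall X Y (f : gob (Hom X Y)),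
      gcomp (fmap (F1 X Y) (ru f))
        (gcomp (phi2 f (one X)) (hc2 (gid (fob (F1 X Y) f)) (phi0 X)))
      = ru (fob (F1 X Y) f);
  mor_lu : forall X Y (f : gob (Hom X Y)),
      gcomp (fmap (F1 X Y) (lu f))
        (gcomp (phi2 (one Y) f) (hc2 (phi0 Y) (gid (fob (F1 X Y) f))))
      = lu (fob (F1 X Y) f);
  mor_ev : forall X Y (f : gob (Hom X Y)),
      gcomp (fmap (F1 X X) (ev f))
        (gcomp (phi2 (inv1 f) f) (hc2 (phiinv f) (gid (fob (F1 X Y) f))))
      = gcomp (phi0 X) (ev (fob (F1 X Y) f));
  mor_co : forall X Y (f : gob (Hom X Y)),
      gcomp (fmap (F1 Y Y) (co f)) (phi0 Y)
      = gcomp (phi2 f (inv1 f))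
          (gcomp (hc2 (gid (fob (F1 X Y) f)) (phiinv f)) (co (fob (F1 X Y) f)))
}.

Definition IsWeakEquivalence (A B : Bigroupoid) (F : Morphism A B) : Prop :=
  (forall Y : Ob B, exists X : Ob A, inhabited (gob (Hom Y (F0 F X)))) /\
  (forall X X' : Ob A, IsEquivalence (F1 F X X')).

(* Strictify by taking as 1-cells the finite strings of composable 1-cells of B:
   concatenation of strings is strictly associative and unital, so associator and
   unitors become identities. A 2-cell between strings is a 2-cell of B between their
   right-bracketed evaluations g1 * (... * (gn * 1)), and horizontal composition is
   conjugated by the canonical cells eval q * eval p => eval (q ++ p). By the pentagon
   and Kelly's unit identities these cells are coherent with the associator and right
   unitor of B, which is what the bigroupoid axioms for strings require. Evaluation and
   the inclusion of 1-cells as strings of length one are inverse to each other on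
   hom-groupoids up to the right unitor, so both are biequivalences. *)
From Stdlib Require Import ProofIrrelevance.
Set Implicit Arguments.
Unset Strict Implicit.

Local Notation "g ∘ f" := (gcomp g f) (at level 40, left associativity).

Section GroupoidFacts.
Variable C : Groupoid.

Lemma gcancel_l (x y z : gob C) (h : ghom y z) (g g' : ghom x y) :
  h ∘ g = h ∘ g' -> g = g'.
Proof.
  intro H. rewrite <- (gcomp_id_l g), <- (gcomp_id_l g'), <- (ginv_l h),
    <- !gcomp_assoc, H. reflexivity.
Qed.

Lemma gcancel_r (x y z : gob C) (h : ghom x y) (g g' : ghom y z) :
  g ∘ h = g' ∘ h -> g = g'.
Proof.
  intro H. rewrite <- (gcomp_id_r g), <- (gcomp_id_r g'), <- (ginv_r h),
    !gcomp_assoc, H. reflexivity.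
Qed.

Lemma ginv_unique (x y : gob C) (f : ghom x y) (g : ghom y x) :
  g ∘ f = gid x -> ginv f = g.
Proof. intro H. apply (gcancel_r (h := f)). rewrite H, ginv_l. reflexivity. Qed.

Lemma ginvK (x y : gob C) (f : ghom x y) : ginv (ginv f) = f.
Proof. apply ginv_unique, ginv_r. Qed.

Lemma ginv_gid (x : gob C) : ginv (gid x) = gid x.
Proof. apply ginv_unique, gcomp_id_l. Qed.

Lemma ginv_comp (x y z : gob C) (g : ghom y z) (f : ghom x y) :
  ginv (g ∘ f) = ginv f ∘ ginv g.
Proof.
  apply ginv_unique. rewrite <- gcomp_assoc, (gcomp_assoc (ginv g)), ginv_l,
    gcomp_id_l, ginv_l. reflexivity.
Qed.

Lemma ginv_compK (x y z : gob C) (h : ghom x y) (r : ghom z x) : ginv h ∘ (h ∘ r) = r.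
Proof. rewrite gcomp_assoc, ginv_l, gcomp_id_l. reflexivity. Qed.

Lemma gcomp_ginvK (x y z : gob C) (h : ghom y x) (r : ghom z x) : h ∘ (ginv h ∘ r) = r.
Proof. rewrite gcomp_assoc, ginv_r, gcomp_id_l. reflexivity. Qed.

Lemma eq_gcomp2 (w x y z : gob C) (a : ghom y z) (b : ghom x y) (c : ghom x z)
  (H : a ∘ b = c) (r : ghom w x) : a ∘ (b ∘ r) = c ∘ r.
Proof. rewrite gcomp_assoc, H. reflexivity. Qed.

Lemma eq_gcomp4 (u v w x y z : gob C) (a : ghom y z) (b : ghom x y) (c : ghom w x)
  (d : ghom v w) (e : ghom v z) (H : a ∘ (b ∘ (c ∘ d)) = e) (r : ghom u v) :
  a ∘ (b ∘ (c ∘ (d ∘ r))) = e ∘ r.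
Proof. rewrite <- H, !gcomp_assoc. reflexivity. Qed.

End GroupoidFacts.

Ltac gsimp := repeat progress (rewrite ?ginv_comp, <- ?gcomp_assoc, ?ginv_compK,
  ?gcomp_ginvK, ?ginv_l, ?ginv_r, ?gcomp_id_l, ?gcomp_id_r, ?ginvK, ?ginv_gid).

Section BigroupoidFacts.
Variable B : Bigroupoid.

Lemma hc2_ginv (A X C : Ob B) (g g' : gob (Hom X C)) (f f' : gob (Hom A X))
  (b : ghom g g') (a : ghom f f') : hc2 (ginv b) (ginv a) = ginv (hc2 b a).
Proof. symmetry. apply ginv_unique. rewrite <- hc2_comp, !ginv_l. apply hc2_id. Qed.

Lemma hc2_gcompl_gid (A X C : Ob B) (g g' g'' : gob (Hom X C)) (f : gob (Hom A X))
  (b' : ghom g' g'') (b : ghom g g') :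
  hc2 (b' ∘ b) (gid f) = hc2 b' (gid f) ∘ hc2 b (gid f).
Proof. rewrite <- hc2_comp, gcomp_id_l. reflexivity. Qed.

Lemma hc2_gcompr_gid (A X C : Ob B) (g : gob (Hom X C)) (f f' f'' : gob (Hom A X))
  (a' : ghom f' f'') (a : ghom f f') :
  hc2 (gid g) (a' ∘ a) = hc2 (gid g) a' ∘ hc2 (gid g) a.
Proof. rewrite <- hc2_comp, gcomp_id_l. reflexivity. Qed.

Lemma hc2_gcompl (A X C : Ob B) (g g' g'' : gob (Hom X C)) (f f' : gob (Hom A X))
  (b' : ghom g' g'') (b : ghom g g') (a : ghom f f') :
  hc2 (b' ∘ b) a = hc2 b' (gid f') ∘ hc2 b a.
Proof. rewrite <- hc2_comp, gcomp_id_l. reflexivity. Qed.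

Lemma hc2_gcompl' (A X C : Ob B) (g g' g'' : gob (Hom X C)) (f f' : gob (Hom A X))
  (b' : ghom g' g'') (b : ghom g g') (a : ghom f f') :
  hc2 (b' ∘ b) a = hc2 b' a ∘ hc2 b (gid f).
Proof. rewrite <- hc2_comp, gcomp_id_r. reflexivity. Qed.

Lemma hc2_gcompr (A X C : Ob B) (g g' : gob (Hom X C)) (f f' f'' : gob (Hom A X))
  (b : ghom g g') (a' : ghom f' f'') (a : ghom f f') :
  hc2 b (a' ∘ a) = hc2 (gid g') a' ∘ hc2 b a.
Proof. rewrite <- hc2_comp, gcomp_id_l. reflexivity. Qed.

Lemma hc2_merge (A X C : Ob B) (g g' g'' : gob (Hom X C)) (f f' f'' : gob (Hom A X))
  (b' : ghom g' g'') (b : ghom g g') (a' : ghom f' f'') (a : ghom f f')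
  (W : gob (Hom A C)) (r : ghom W (hc g f)) :
  hc2 b' a' ∘ (hc2 b a ∘ r) = hc2 (b' ∘ b) (a' ∘ a) ∘ r.
Proof. rewrite hc2_comp, gcomp_assoc. reflexivity. Qed.

Lemma lwhisk_inj (A X : Ob B) (f f' : gob (Hom A X)) (a a' : ghom f f') :
  hc2 (gid (one X)) a = hc2 (gid (one X)) a' -> a = a'.
Proof. intro H. apply (gcancel_r (h := lu f)). rewrite <- !lu_nat, H. reflexivity. Qed.

Lemma rwhisk_inj (A X : Ob B) (f f' : gob (Hom A X)) (a a' : ghom f f') :
  hc2 a (gid (one A)) = hc2 a' (gid (one A)) -> a = a'.
Proof. intro H. apply (gcancel_r (h := ru f)). rewrite <- !ru_nat, H. reflexivity. Qed.

Lemma lu_nat_inv (A X : Ob B) (f f' : gob (Hom A X)) (a : ghom f f') :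
  hc2 (gid (one X)) a ∘ ginv (lu f) = ginv (lu f') ∘ a.
Proof.
  apply (gcancel_l (h := lu f')). gsimp. rewrite (eq_gcomp2 (lu_nat a)). gsimp. reflexivity.
Qed.

Lemma ru_nat_inv (A X : Ob B) (f f' : gob (Hom A X)) (a : ghom f f') :
  hc2 a (gid (one A)) ∘ ginv (ru f) = ginv (ru f') ∘ a.
Proof.
  apply (gcancel_l (h := ru f')). gsimp. rewrite (eq_gcomp2 (ru_nat a)). gsimp. reflexivity.
Qed.

Lemma ru_hc_one (A X : Ob B) (f : gob (Hom A X)) :
  hc2 (ru f) (gid (one A)) = ru (hc f (one A)).
Proof. apply (gcancel_l (h := ru f)). apply ru_nat. Qed.

(* Kelly's coherence lemmas: the other two triangles and [l_1 = r_1] follow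
   from the pentagon and the middle triangle. *)
Lemma kelly_lu (A X C : Ob B) (g : gob (Hom X C)) (f : gob (Hom A X)) :
  hc2 (lu g) (gid f) = lu (hc g f) ∘ assoc (one C) g f.
Proof.
  apply lwhisk_inj.
  apply (gcancel_r (h := assoc (one C) (hc (one C) g) f ∘ hc2 (assoc (one C) (one C) g) (gid f))).
  transitivity (hc2 (gid (one C)) (lu (hc g f)) ∘
     (hc2 (gid (one C)) (assoc (one C) g f) ∘
        (assoc (one C) (hc (one C) g) f ∘ hc2 (assoc (one C) (one C) g) (gid f)))).
  2: { rewrite hc2_gcompr_gid, !gcomp_assoc. reflexivity. }
  rewrite pentagon, (gcomp_assoc (hc2 (gid (one C)) (lu (hc g f)))), triangle.
  rewrite <- (hc2_id g f), <- assoc_nat.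
  rewrite <- triangle, hc2_gcompl_gid, (gcomp_assoc (assoc (one C) g f)).
  rewrite (assoc_nat (gid (one C)) (lu g) (gid f)), !gcomp_assoc. reflexivity.
Qed.

Lemma kelly_ru (A X C : Ob B) (g : gob (Hom X C)) (f : gob (Hom A X)) :
  ru (hc g f) = hc2 (gid g) (ru f) ∘ assoc g f (one A).
Proof.
  apply rwhisk_inj, (gcancel_l (h := assoc g f (one A))).
  rewrite <- triangle, gcomp_assoc, <- (hc2_id g f), assoc_nat.
  rewrite <- (gcomp_assoc (hc2 (gid g) (hc2 (gid f) (lu (one A))))), <- pentagon.
  rewrite (gcomp_assoc (hc2 (gid g) (hc2 (gid f) (lu (one A))))), <- hc2_gcompr_gid, triangle.
  rewrite (gcomp_assoc (hc2 (gid g) (hc2 (ru f) (gid (one A))))).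
  rewrite <- (assoc_nat (gid g) (ru f) (gid (one A))), <- gcomp_assoc, <- hc2_gcompl_gid.
  reflexivity.
Qed.

Lemma kelly_one (A : Ob B) : lu (one A) = ru (one A).
Proof.
  apply rwhisk_inj. rewrite kelly_lu, <- triangle. f_equal.
  apply (gcancel_l (h := lu (one A))). rewrite lu_nat. reflexivity.
Qed.

End BigroupoidFacts.

Unset Implicit Arguments.
Inductive path (B : Bigroupoid) : Ob B -> Ob B -> Type :=
| pnil : forall X, path B X X
| pcons : forall X Y Z, gob (Hom (b0:=B) Y Z) -> path B X Y -> path B X Z.
Arguments pnil {B} X.
Arguments pcons {B X Y Z} g p.
Set Implicit Arguments.

Section Paths.
Variable B : Bigroupoid.

Fixpoint eval (X Y : Ob B) (p : path B X Y) : gob (Hom X Y) :=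
  match p with
  | pnil X => one X
  | pcons g q => hc g (eval q)
  end.

Fixpoint pcat (X Y Z : Ob B) (q : path B Y Z) : path B X Y -> path B X Z :=
  match q in path _ Y Z return path B X Y -> path B X Z with
  | pnil _ => fun p => p
  | pcons g q' => fun p => pcons g (pcat q' p)
  end.

Lemma pcat_nil (X Y : Ob B) (p : path B X Y) : pcat p (pnil X) = p.
Proof. induction p as [|X' Y' Z g p IH]; simpl; [reflexivity | rewrite IH; reflexivity]. Qed.

Lemma pcatA (A X C D : Ob B) (r : path B C D) (q : path B X C) (p : path B A X) :
  pcat (pcat r q) p = pcat r (pcat q p).
Proof. induction r as [|C' D' D'' g r IH]; simpl; [reflexivity | rewrite IH; reflexivity]. Qed.

Fixpoint eval_cat (X Y Z : Ob B) (q : path B Y Z) :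
  forall p : path B X Y, ghom (hc (eval q) (eval p)) (eval (pcat q p)) :=
  match q in path _ Y Z
    return forall p : path B X Y, ghom (hc (eval q) (eval p)) (eval (pcat q p)) with
  | pnil _ => fun p => lu (eval p)
  | pcons g q' => fun p => hc2 (gid g) (eval_cat q' p) ∘ assoc g (eval q') (eval p)
  end.

Lemma eval_cat_single (X Y Z : Ob B) (g : gob (Hom Y Z)) (p : path B X Y) :
  eval_cat (pcons g (pnil Y)) p = hc2 (ru g) (gid (eval p)).
Proof. apply triangle. Qed.

Definition ecell (X Y : Ob B) (p q : path B X Y) (e : p = q) : ghom (eval p) (eval q) :=
  cell_of_eq (f_equal (@eval X Y) e).

Lemma ecell_refl (X Y : Ob B) (p : path B X Y) (e : p = p) : ecell e = gid (eval p).
Proof. rewrite (proof_irrelevance _ e eq_refl). reflexivity. Qed.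

Lemma ecell_pi (X Y : Ob B) (p q : path B X Y) (e1 e2 : p = q) : ecell e1 = ecell e2.
Proof. rewrite (proof_irrelevance _ e1 e2). reflexivity. Qed.

Lemma ecell_trans (X Y : Ob B) (p q r : path B X Y) (e1 : q = r) (e2 : p = q) :
  ecell e1 ∘ ecell e2 = ecell (eq_trans e2 e1).
Proof. destruct e1, e2. apply gcomp_id_l. Qed.

Lemma ecell_cons (X Y Z : Ob B) (g : gob (Hom Y Z)) (p q : path B X Y)
  (e : p = q) (e' : pcons g p = pcons g q) : ecell e' = hc2 (gid g) (ecell e).
Proof. destruct e. rewrite !ecell_refl. symmetry. apply hc2_id. Qed.

Lemma eval_catA (A X C D : Ob B) (r : path B C D) (q : path B X C) (p : path B A X)
  (e : pcat (pcat r q) p = pcat r (pcat q p)) :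
  eval_cat r (pcat q p) ∘ (hc2 (gid (eval r)) (eval_cat q p) ∘ assoc (eval r) (eval q) (eval p))
  = ecell e ∘ (eval_cat (pcat r q) p ∘ hc2 (eval_cat r q) (gid (eval p))).
Proof.
  revert q p e. induction r as [D | C' D' D g r IH]; intros q p e; simpl in *.
  - rewrite ecell_refl, gcomp_id_l, gcomp_assoc, lu_nat, <- gcomp_assoc, <- kelly_lu.
    reflexivity.
  - rewrite (ecell_cons (pcatA r q p) e).
    transitivity (hc2 (gid g) (eval_cat r (pcat q p) ∘
        (hc2 (gid (eval r)) (eval_cat q p) ∘ assoc (eval r) (eval q) (eval p)))
      ∘ (assoc g (hc (eval r) (eval q)) (eval p) ∘ hc2 (assoc g (eval r) (eval q)) (gid (eval p)))).
    + rewrite !hc2_gcompr_gid, <- !gcomp_assoc. f_equal.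
      rewrite pentagon, <- (hc2_id g (eval r)).
      rewrite (eq_gcomp2 (assoc_nat (gid g) (gid (eval r)) (eval_cat q p))), <- !gcomp_assoc.
      reflexivity.
    + rewrite (IH q p (pcatA r q p)), !hc2_gcompr_gid, hc2_gcompl_gid, <- !gcomp_assoc.
      rewrite (eq_gcomp2 (assoc_nat (gid g) (eval_cat r q) (gid (eval p)))), <- !gcomp_assoc.
      reflexivity.
Qed.

Lemma eval_cat_nil (X Y : Ob B) (p : path B X Y) (e : pcat p (pnil X) = p) :
  ecell e ∘ eval_cat p (pnil X) = ru (eval p).
Proof.
  revert e. induction p as [Y | X' Y' Z g p IH]; intro e; simpl in *.
  - rewrite ecell_refl, gcomp_id_l. apply kelly_one.
  - rewrite (ecell_cons (pcat_nil p) e), gcomp_assoc, <- hc2_gcompr_gid, (IH (pcat_nil p)).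
    symmetry. apply kelly_ru.
Qed.

Lemma ecell_pcatA (A X C D : Ob B) (r : path B C D) (q : path B X C) (p : path B A X)
  (e : pcat (pcat r q) p = pcat r (pcat q p)) :
  ecell e = eval_cat r (pcat q p) ∘ (hc2 (gid (eval r)) (eval_cat q p) ∘
    (assoc (eval r) (eval q) (eval p) ∘ ginv (eval_cat (pcat r q) p ∘ hc2 (eval_cat r q) (gid (eval p))))).
Proof.
  apply (gcancel_r (h := eval_cat (pcat r q) p ∘ hc2 (eval_cat r q) (gid (eval p)))).
  rewrite <- (eval_catA e). gsimp. reflexivity.
Qed.

Lemma ecell_pcat_nil (X Y : Ob B) (p : path B X Y) (e : pcat p (pnil X) = p) :
  ecell e = ru (eval p) ∘ ginv (eval_cat p (pnil X)).
Proof. rewrite <- (eval_cat_nil e). gsimp. reflexivity. Qed.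

End Paths.

Section StrictBigroupoid.
Variable B : Bigroupoid.

Definition path_hom (X Y : Ob B) : Groupoid.
Proof.
  refine {| gob := path B X Y; ghom := fun p q => ghom (eval p) (eval q);
            gcomp := fun _ _ _ g f => g ∘ f; gid := fun p => gid (eval p);
            ginv := fun _ _ f => ginv f |}.
  - intros; apply gcomp_assoc.
  - intros; apply gcomp_id_l.
  - intros; apply gcomp_id_r.
  - intros; apply ginv_l.
  - intros; apply ginv_r.
Defined.

Lemma cell_of_eq_path (X Y : Ob B) (p q : path B X Y) (e : p = q) :
  cell_of_eq (C := path_hom X Y) e = ecell e.
Proof. destruct e. reflexivity. Qed.

Definition path_hc2 (A X C : Ob B) (g g' : path B X C) (f f' : path B A X)
  (b : ghom (eval g) (eval g')) (a : ghom (eval f) (eval f')) :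
  ghom (eval (pcat g f)) (eval (pcat g' f')) :=
  eval_cat g' f' ∘ (hc2 b a ∘ ginv (eval_cat g f)).

Definition path_inv (X Y : Ob B) (p : path B X Y) : path B Y X :=
  pcons (inv1 (eval p)) (pnil Y).

Definition path_co (X Y : Ob B) (p : path B X Y) :
  ghom (one Y) (eval (pcat p (path_inv p))) :=
  eval_cat p (path_inv p) ∘ (hc2 (gid (eval p)) (ginv (ru (inv1 (eval p)))) ∘ co (eval p)).

Lemma eval_cat_inv (A X Y : Ob B) (f : path B X Y) (p : path B A Y) :
  eval_cat (path_inv f) p = hc2 (ru (inv1 (eval f))) (gid (eval p)).
Proof. apply eval_cat_single. Qed.

Lemma path_hc2_eval_cat (A X C : Ob B) (g g' : path B X C) (f f' : path B A X)
  (b : ghom (eval g) (eval g')) (a : ghom (eval f) (eval f')) :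
  path_hc2 b a ∘ eval_cat g f = eval_cat g' f' ∘ hc2 b a.
Proof. unfold path_hc2. gsimp. reflexivity. Qed.

Lemma path_hc2_eval_cat_r (A X C : Ob B) (g g' : path B X C) (f f' : path B A X)
  (b : ghom (eval g) (eval g')) (a : ghom (eval f) (eval f')) (W : gob (Hom A C))
  (r : ghom W (hc (eval g) (eval f))) :
  path_hc2 b a ∘ (eval_cat g f ∘ r) = eval_cat g' f' ∘ (hc2 b a ∘ r).
Proof. rewrite !gcomp_assoc, path_hc2_eval_cat. reflexivity. Qed.

Lemma path_hc2_id (A X C : Ob B) (g : path B X C) (f : path B A X) :
  path_hc2 (gid (eval g)) (gid (eval f)) = gid (eval (pcat g f)).
Proof. unfold path_hc2. rewrite hc2_id. gsimp. reflexivity. Qed.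

Lemma path_hc2_comp (A X C : Ob B) (g g' g'' : path B X C) (f f' f'' : path B A X)
  (b' : ghom (eval g') (eval g'')) (b : ghom (eval g) (eval g'))
  (a' : ghom (eval f') (eval f'')) (a : ghom (eval f) (eval f')) :
  path_hc2 (b' ∘ b) (a' ∘ a) = path_hc2 b' a' ∘ path_hc2 b a.
Proof. unfold path_hc2. rewrite hc2_comp. gsimp. reflexivity. Qed.

Lemma path_hc2_gid_ecell (A X C : Ob B) (g : path B X C) (f f' : path B A X) (e : f = f') :
  path_hc2 (gid (eval g)) (ecell e) = ecell (f_equal (pcat g) e).
Proof. destruct e. apply path_hc2_id. Qed.

Lemma path_hc2_ecell_gid (A X C : Ob B) (g g' : path B X C) (f : path B A X) (e : g = g') :
  path_hc2 (ecell e) (gid (eval f)) = ecell (f_equal (fun x => pcat x f) e).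
Proof. destruct e. apply path_hc2_id. Qed.

Lemma path_assoc_nat (A X C D : Ob B) (h h' : path B C D) (g g' : path B X C)
  (f f' : path B A X) (c : ghom (eval h) (eval h')) (b : ghom (eval g) (eval g'))
  (a : ghom (eval f) (eval f'))
  (e : pcat (pcat h g) f = pcat h (pcat g f)) (e' : pcat (pcat h' g') f' = pcat h' (pcat g' f')) :
  ecell e' ∘ path_hc2 (path_hc2 c b) a = path_hc2 c (path_hc2 b a) ∘ ecell e.
Proof.
  apply (gcancel_r (h := eval_cat (pcat h g) f ∘ hc2 (eval_cat h g) (gid (eval f)))).
  rewrite <- (gcomp_assoc (path_hc2 c (path_hc2 b a))), <- (eval_catA e).
  rewrite <- !gcomp_assoc, path_hc2_eval_cat_r, <- hc2_comp, gcomp_id_r, path_hc2_eval_cat.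
  rewrite hc2_gcompl, (gcomp_assoc (eval_cat (pcat h' g') f')), (gcomp_assoc (ecell e')),
    <- (eval_catA e').
  rewrite path_hc2_eval_cat_r, hc2_merge, gcomp_id_r, path_hc2_eval_cat, hc2_gcompr.
  rewrite <- !gcomp_assoc, assoc_nat. reflexivity.
Qed.

Lemma path_lu_nat (A X : Ob B) (f f' : path B A X) (a : ghom (eval f) (eval f')) :
  gid (eval f') ∘ path_hc2 (g := pnil X) (g' := pnil X) (gid (one X)) a = a ∘ gid (eval f).
Proof. unfold path_hc2; simpl. gsimp. rewrite (eq_gcomp2 (lu_nat a)). gsimp. reflexivity. Qed.

Lemma path_ru_nat (A X : Ob B) (f f' : path B A X) (a : ghom (eval f) (eval f')) :
  cell_of_eq (C := path_hom A X) (pcat_nil f') ∘ path_hc2 (f := pnil A) (f' := pnil A) a (gid (one A))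
  = a ∘ cell_of_eq (C := path_hom A X) (pcat_nil f).
Proof.
  rewrite !cell_of_eq_path, !ecell_pcat_nil. unfold path_hc2. cbn [path_hom gcomp].
  gsimp. rewrite (eq_gcomp2 (ru_nat a)). gsimp. reflexivity.
Qed.

Lemma path_ev_nat (X Y : Ob B) (f f' : path B X Y) (a : ghom (eval f) (eval f')) :
  ev (eval f') ∘ path_hc2 (g := path_inv f) (g' := path_inv f') (hc2 (inv2 a) (gid (one Y))) a
  = gid (one X) ∘ ev (eval f).
Proof.
  unfold path_hc2. rewrite !eval_cat_inv. cbn [path_hom gcomp gid ginv eval pcat path_inv].
  gsimp. rewrite hc2_merge, ru_nat, gcomp_id_l, hc2_gcompl'. gsimp.
  rewrite ev_nat. apply gcomp_id_l.
Qed.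

Lemma path_co_nat (X Y : Ob B) (f f' : path B X Y) (a : ghom (eval f) (eval f')) :
  path_co f' ∘ gid (one Y)
  = path_hc2 (f := path_inv f) (f' := path_inv f') a (hc2 (inv2 a) (gid (one Y))) ∘ path_co f.
Proof.
  unfold path_co. rewrite gcomp_id_r, path_hc2_eval_cat_r. unfold path_inv. simpl.
  rewrite hc2_merge, gcomp_id_r, ru_nat_inv, hc2_gcompr, <- gcomp_assoc, <- co_nat, gcomp_id_r.
  reflexivity.
Qed.

Lemma path_pentagon (A X C D E : Ob B) (k : path B D E) (h : path B C D)
  (g : path B X C) (f : path B A X) :
  path_hc2 (gid (eval k)) (cell_of_eq (C := path_hom A D) (pcatA h g f))
  ∘ (cell_of_eq (C := path_hom A E) (pcatA k (pcat h g) f)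
     ∘ path_hc2 (cell_of_eq (C := path_hom X E) (pcatA k h g)) (gid (eval f)))
  = cell_of_eq (C := path_hom A E) (pcatA k h (pcat g f))
    ∘ cell_of_eq (C := path_hom A E) (pcatA (pcat k h) g f).
Proof.
  rewrite !cell_of_eq_path, path_hc2_gid_ecell, path_hc2_ecell_gid. cbn [path_hom gcomp].
  rewrite !ecell_trans. apply ecell_pi.
Qed.

Lemma path_triangle (A X C : Ob B) (g : path B X C) (f : path B A X) :
  path_hc2 (g := g) (f := pcat (pnil X) f) (gid (eval g)) (gid (eval f))
  ∘ cell_of_eq (C := path_hom A C) (pcatA g (pnil X) f)
  = path_hc2 (cell_of_eq (C := path_hom X C) (pcat_nil g)) (gid (eval f)).
Proof.
  rewrite !cell_of_eq_path, path_hc2_id, path_hc2_ecell_gid. cbn [path_hom gcomp].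
  rewrite gcomp_id_l. apply ecell_pi.
Qed.

Lemma path_zigzag (X Y : Ob B) (f : path B X Y) :
  cell_of_eq (C := path_hom X Y) (pcat_nil f)
  ∘ (path_hc2 (g := f) (f := pcat (path_inv f) f) (f' := pnil X) (gid (eval f)) (ev (eval f))
     ∘ (cell_of_eq (C := path_hom X Y) (pcatA f (path_inv f) f)
        ∘ path_hc2 (g := pnil Y) (g' := pcat f (path_inv f)) (f := f) (f' := f)
            (path_co f) (gid (eval f)))) = gid (eval f).
Proof.
  rewrite !cell_of_eq_path, ecell_pcat_nil, ecell_pcatA. unfold path_hc2, path_co.
  rewrite !eval_cat_inv. unfold path_inv. simpl.
  gsimp. rewrite hc2_gcompl'. gsimp. rewrite hc2_gcompl'. gsimp.
  rewrite (eq_gcomp2 (assoc_nat (gid (eval f)) (ginv (ru (inv1 (eval f)))) (gid (eval f)))).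
  gsimp.
  rewrite (hc2_merge (gid (eval f)) (gid (eval f)) (hc2 (ru (inv1 (eval f))) (gid (eval f)))
             (hc2 (ginv (ru (inv1 (eval f)))) (gid (eval f)))).
  rewrite <- hc2_comp, ginv_r, !gcomp_id_l, !hc2_id, gcomp_id_l.
  rewrite (eq_gcomp4 (zigzag (eval f))). apply ginv_r.
Qed.

Definition strictify : Bigroupoid.
Proof.
  refine {| Ob := Ob B; Hom := path_hom;
    hc := fun A X C g f => pcat g f;
    hc2 := fun A X C g g' f f' b a => path_hc2 b a;
    one := fun A => pnil A;
    inv1 := fun A X p => path_inv p;
    inv2 := fun A X f f' a => hc2 (inv2 a) (gid (one X));
    assoc := fun A X C D h g f => cell_of_eq (C := path_hom A D) (pcatA h g f);
    lu := fun A X f => gid (eval f);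
    ru := fun A X f => cell_of_eq (C := path_hom A X) (pcat_nil f);
    ev := fun A X f => ev (eval f);
    co := fun A X f => path_co f |}.
  - intros; apply path_hc2_id.
  - intros; apply path_hc2_comp.
  - intros; cbn. rewrite inv2_id. apply hc2_id.
  - intros; cbn. rewrite inv2_comp. apply hc2_gcompl_gid.
  - intros. rewrite !cell_of_eq_path. apply path_assoc_nat.
  - intros. apply path_lu_nat.
  - intros. apply path_ru_nat.
  - intros. apply path_ev_nat.
  - intros. apply path_co_nat.
  - intros. apply path_pentagon.
  - intros. apply path_triangle.
  - intros. apply path_zigzag.
Defined.

Lemma strictify_AU : IsAU strictify.
Proof.
  split; [|split].
  - intros. exists (pcatA h g f). reflexivity.
  - intros. exists eq_refl. reflexivity.
  - intros. exists (pcat_nil f). reflexivity.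
Qed.

End StrictBigroupoid.

Section Biequivalences.
Variable B : Bigroupoid.

Definition eval_functor (X Y : Ob B) : Functor (path_hom X Y) (Hom X Y).
Proof.
  refine (@Build_Functor (path_hom X Y) (Hom X Y) (@eval B X Y) (fun p q b => b) _ _);
    reflexivity.
Defined.

Definition single_functor (X Y : Ob B) : Functor (Hom X Y) (path_hom X Y).
Proof.
  refine (@Build_Functor (Hom X Y) (path_hom X Y) (fun g => pcons g (pnil X))
            (fun g g' b => hc2 b (gid (one X))) _ _).
  - intros. apply hc2_id.
  - intros. apply hc2_gcompl_gid.
Defined.

Lemma single_eval_iso (X Y : Ob B) :
  inhabited (NatIso (comp_functor (single_functor X Y) (eval_functor X Y))
                    (id_functor (path_hom X Y))).
Proof.
  constructor.
  refine (@Build_NatIso _ _ (comp_functor (single_functor X Y) (eval_functor X Y))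
            (id_functor (path_hom X Y)) (fun p : path B X Y => ru (eval p)) _).
  intros. apply ru_nat.
Qed.

Lemma eval_single_iso (X Y : Ob B) :
  inhabited (NatIso (comp_functor (eval_functor X Y) (single_functor X Y))
                    (id_functor (Hom X Y))).
Proof.
  constructor.
  refine (@Build_NatIso _ _ (comp_functor (eval_functor X Y) (single_functor X Y))
            (id_functor (Hom X Y)) (fun g => ru g) _).
  intros. apply ru_nat.
Qed.

Definition eval_morphism : Morphism (strictify B) B.
Proof.
  refine (@Build_Morphism (strictify B) B (fun X => X) eval_functor
    (fun X Y Z (g : path B Y Z) (f : path B X Y) => eval_cat g f) _
    (fun X => gid (one X)) (fun X Y (f : path B X Y) => ginv (ru (inv1 (eval f))))
    _ _ _ _ _ _).
  - intros. apply path_hc2_eval_cat.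
  - intros. apply ru_nat_inv.
  - intros. cbn. rewrite cell_of_eq_path. symmetry. apply eval_catA.
  - intros. cbn. rewrite hc2_id, gcomp_id_r, cell_of_eq_path. apply eval_cat_nil.
  - intros. cbn. rewrite hc2_id, gcomp_id_r. apply gcomp_id_l.
  - intros. cbn. rewrite triangle, <- hc2_comp, ginv_r, gcomp_id_l, hc2_id, gcomp_id_r,
      gcomp_id_l. reflexivity.
  - intros. cbn. unfold path_co. rewrite gcomp_id_r. reflexivity.
Defined.

Definition single_morphism : Morphism B (strictify B).
Proof.
  refine (@Build_Morphism B (strictify B) (fun X => X) single_functor
    (fun X Y Z (g : gob (Hom Y Z)) (f : gob (Hom X Y)) =>
       (ginv (ru (hc g f)) ∘ hc2 (gid g) (ru f) : ghom (hc g (hc f (one X))) (hc (hc g f) (one X)))) _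
    (fun X => ginv (ru (one X)))
    (fun X Y (f : gob (Hom X Y)) => hc2 (inv2 (ru f)) (gid (one Y))) _ _ _ _ _ _).
  - intros. cbn. unfold path_hc2. rewrite !eval_cat_single. cbn.
    apply (gcancel_r (h := hc2 (ru g) (gid (hc f (one X))))). gsimp.
    rewrite (eq_gcomp2 (ru_nat_inv (hc2 b a))). gsimp. rewrite <- !hc2_comp. f_equal. f_equal.
    + rewrite !gcomp_id_l, ru_nat. reflexivity.
    + rewrite gcomp_id_r, gcomp_id_l, ru_nat. reflexivity.
  - intros. cbn. rewrite <- !hc2_gcompl_gid, <- !inv2_comp, ru_nat. reflexivity.
  - intros. cbn. rewrite cell_of_eq_path, ecell_refl. unfold path_hc2. simpl. rewrite !triangle.
    gsimp. rewrite <- !hc2_ginv, !ginv_gid.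
    rewrite (eq_gcomp2 (ru_nat_inv (assoc h g f))).
    rewrite <- !hc2_comp, !hc2_merge. gsimp.
    rewrite (eq_gcomp2 (assoc_nat (gid h) (ru g) (ru f))). gsimp.
    rewrite <- hc2_comp. gsimp. rewrite <- hc2_comp. gsimp. reflexivity.
  - intros. cbn. rewrite cell_of_eq_path, ecell_refl. unfold path_hc2. simpl. rewrite !triangle.
    gsimp. rewrite <- ?hc2_ginv, ?ginv_gid.
    rewrite ru_hc_one, gcomp_ginvK, !hc2_merge, <- hc2_comp. gsimp. apply hc2_id.
  - intros. cbn. unfold path_hc2. simpl. rewrite !triangle.
    gsimp. rewrite <- ?hc2_ginv, ?ginv_gid.
    rewrite (hc2_merge (ru (one Y)) (ginv (ru (one Y)))), ginv_r, gcomp_id_l, hc2_id, gcomp_id_l.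
    rewrite lu_nat_inv, (eq_gcomp2 (ru_nat_inv (lu f))). gsimp. reflexivity.
  - intros. cbn. unfold path_hc2. simpl. rewrite !triangle.
    gsimp. rewrite <- ?hc2_ginv, ?ginv_gid.
    rewrite (eq_gcomp2 (ru_nat_inv (ev f))), !hc2_merge, <- hc2_comp. gsimp.
    rewrite (eq_gcomp2 (ru_nat _)). gsimp. rewrite ev_nat, gcomp_id_l. reflexivity.
  - intros. cbn. unfold path_hc2, path_co, path_inv. simpl. rewrite !triangle.
    gsimp. rewrite <- ?hc2_ginv, ?ginv_gid.
    rewrite ru_nat_inv, !hc2_merge. gsimp. rewrite (eq_gcomp2 (ru_nat _)). gsimp.
    rewrite <- co_nat, gcomp_id_r. reflexivity.
Defined.

Lemma eval_weak_equivalence : IsWeakEquivalence eval_morphism.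
Proof.
  split.
  - intro Y. exists Y. constructor. exact (one Y).
  - intros X X'. exists (single_functor X X').
    split; [apply single_eval_iso | apply eval_single_iso].
Qed.

Lemma single_weak_equivalence : IsWeakEquivalence single_morphism.
Proof.
  split.
  - intro Y. exists Y. constructor. exact (@pnil B Y).
  - intros X X'. exists (eval_functor X X').
    split; [apply eval_single_iso | apply single_eval_iso].
Qed.

End Biequivalences.

Theorem lemmaB2 :
  forall B : Bigroupoid,
    exists (SB : Bigroupoid) (E : Morphism SB B) (S : Morphism B SB),
      IsAU SB /\ IsWeakEquivalence E /\ IsWeakEquivalence S.
Proof.
  intro B. exists (strictify B), (eval_morphism B), (single_morphism B).
  split; [apply strictify_AU | split].
  - apply eval_weak_equivalence.
  - apply single_weak_equivalence.
Qed.
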